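(* Let $\mathbf{d}_{\omega} \in \{-1,1\}^M$ be a random vector with independent entries, each $\pm1$ with probability $1/2$, let $\mathbf{f}_\omega\in\mathbb{C}^W$ be fixed, $\mathbf{A}_\omega=\mathbf{d}_\omega\mathbf{f}_\omega^*$, and let $\mathbf{C}\in\mathbb{C}^{M\times W}$ be fixed. Then \[ \mathbb{E}\, |\langle\mathbf{C},\mathbf{A}_{\omega}\rangle|^2 \mathbf{d}_{\omega}\mathbf{d}_{\omega}^* \preccurlyeq 3\|\mathbf{C}\mathbf{f}_{\omega}\|_2^2 \mathbf{I}_M. \]
   Context: $\langle\mathbf{X},\mathbf{Y}\rangle=\mathrm{tr}(\mathbf{X}\mathbf{Y}^* )$ is the trace inner product, $\preccurlyeq$ is the positive semidefinite order, and $\mathbf{I}_M$ is the $M\times M$ identity. In the paper $\mathbf{f}_\omega$ is a column of a partial Fourier matrix. *)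

From HB Require Import structures.
From mathcomp Require Import all_boot all_order all_algebra.
Set Implicit Arguments. Unset Strict Implicit. Unset Printing Implicit Defensive.
Import Order.TTheory GRing.Theory Num.Theory.
Local Open Scope ring_scope.

(* Complex scalars: any numClosedFieldType C (e.g. algC, or complex R). *)

Definition adjmx (C : numClosedFieldType) m n (X : 'M[C]_(m, n)) : 'M[C]_(n, m) :=
  (map_mx Num.conj X)^T.

Definition trdot (C : numClosedFieldType) m n (X Y : 'M[C]_(m, n)) : C :=
  \tr (X *m adjmx Y).

Definition psdmx (C : numClosedFieldType) n (A : 'M[C]_n) : Prop :=
  adjmx A = A /\ forall v : 'cV[C]_n, 0 <= (adjmx v *m A *m v) 0 0.

Definition loewner_le (C : numClosedFieldType) n (A B : 'M[C]_n) : Prop :=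
  psdmx (B - A).

Definition signvec (C : numClosedFieldType) M (b : {ffun 'I_M -> bool}) : 'cV[C]_M :=
  \col_i ((-1) ^+ b i).

(* Expectation over d with i.i.d. uniform +-1 entries: uniform average over
   all 2^M sign patterns. *)
Definition rademacher_E (C : numClosedFieldType) M m n
    (F : 'cV[C]_M -> 'M[C]_(m, n)) : 'M[C]_(m, n) :=
  (2 ^+ M)^-1 *: \sum_(b : {ffun 'I_M -> bool}) F (signvec C b).

Definition norm2sq (C : numClosedFieldType) n (v : 'cV[C]_n) : C :=
  \sum_i `|v i 0| ^+ 2.

From mathcomp Require Import all_boot all_order all_algebra.
From mathcomp Require Import ring.
Set Implicit Arguments. Unset Strict Implicit. Unset Printing Implicit Defensive.
Import Order.TTheory GRing.Theory Num.Theory.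
Local Open Scope ring_scope.

(* The expectation is Hermitian, and its quadratic form at v is the mixed
   fourth moment E |X(c)|^2 |X(v)|^2 of two Rademacher sums, where
   X(a) = sum_i d_i a_i and c = C f.  Conditioning on the first sign, the
   diagonal terms of the expansion are controlled by the second moment
   E |X(a)|^2 = |a|^2, and the single cross term by AM-GM; an induction on M
   then gives E |X(c)|^2 |X(v)|^2 <= 3 |c|^2 |v|^2. *)

Section FfunCons.
Variables (T : finType) (n : nat).

Definition ffun_cons (x : T) (b : {ffun 'I_n -> T}) : {ffun 'I_n.+1 -> T} :=
  [ffun i => if unlift ord0 i is Some j then b j else x].

Lemma ffun_cons0 x b : ffun_cons x b ord0 = x.
Proof. by rewrite ffunE unlift_none. Qed.

Lemma ffun_consS x b j : ffun_cons x b (lift ord0 j) = b j.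
Proof. by rewrite ffunE liftK. Qed.

Lemma big_ffun_cons (R : nmodType) (F : {ffun 'I_n.+1 -> T} -> R) :
  \sum_b F b = \sum_x \sum_(b : {ffun 'I_n -> T}) F (ffun_cons x b).
Proof.
rewrite pair_big /= (reindex (fun p => ffun_cons p.1 p.2)) //=.
exists (fun b => (b ord0, [ffun j => b (lift ord0 j)])) => [[x b] _ | b _].
  by rewrite ffun_cons0; congr pair; apply/ffunP => j; rewrite ffunE ffun_consS.
apply/ffunP => i; rewrite ffunE.
by case: (unliftP ord0 i) => [j ->|->]; rewrite ?ffunE.
Qed.

End FfunCons.

Section RademacherMoments.
Variable C : numClosedFieldType.

Definition sign (x : bool) : C := (-1) ^+ x.

Definition rademacher_sum n (b : {ffun 'I_n -> bool}) (a : 'I_n -> C) : C :=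
  \sum_i sign (b i) * a i.

Lemma conj_sign x : (sign x)^* = sign x.
Proof. by case: x; rewrite /sign ?expr1 ?expr0 ?rmorphN rmorph1. Qed.

Lemma rademacher_sum_cons n x b (a : 'I_n.+1 -> C) :
  rademacher_sum (ffun_cons x b) a =
  sign x * a ord0 + rademacher_sum b (fun j => a (lift ord0 j)).
Proof.
rewrite /rademacher_sum big_ord_recl ffun_cons0; congr (_ + _).
by apply: eq_bigr => j _; rewrite ffun_consS.
Qed.

Lemma sum_sign_normD_sq (p u : C) :
  \sum_x `|sign x * p + u| ^+ 2 = 2 * `|u| ^+ 2 + 2 * `|p| ^+ 2.
Proof.
rewrite big_bool /sign expr1 expr0 !normCK !rmorphD !rmorphM /= rmorphN rmorph1.
ring.
Qed.

Lemma normr_mul_conjD_le (u p : C) : `|u * p^* + u^* * p| <= 2 * (`|u| * `|p|).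
Proof.
apply: le_trans (ler_normD _ _) _.
by rewrite !normrM !norm_conjC mulr2n mulrDl mul1r.
Qed.

Lemma sum_sign_normD_sq_mul_le (p u q w : C) :
  \sum_x `|sign x * p + u| ^+ 2 * `|sign x * q + w| ^+ 2 <=
  2 * (`|u| ^+ 2 * `|w| ^+ 2) + 6 * (`|u| ^+ 2 * `|q| ^+ 2)
  + 6 * (`|w| ^+ 2 * `|p| ^+ 2) + 2 * (`|p| ^+ 2 * `|q| ^+ 2).
Proof.
set r := u * p^* + u^* * p; set s := w * q^* + w^* * q.
set B := 2 * (`|u| ^+ 2 * `|w| ^+ 2) + 2 * (`|u| ^+ 2 * `|q| ^+ 2)
  + 2 * (`|w| ^+ 2 * `|p| ^+ 2) + 2 * (`|p| ^+ 2 * `|q| ^+ 2).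
have -> : \sum_x `|sign x * p + u| ^+ 2 * `|sign x * q + w| ^+ 2 = B + 2 * (r * s).
  rewrite big_bool /sign expr1 expr0 /B /r /s !normCK.
  rewrite !rmorphD !rmorphM /= rmorphN !rmorph1; ring.
have -> : 2 * (`|u| ^+ 2 * `|w| ^+ 2) + 6 * (`|u| ^+ 2 * `|q| ^+ 2)
    + 6 * (`|w| ^+ 2 * `|p| ^+ 2) + 2 * (`|p| ^+ 2 * `|q| ^+ 2)
    = B + 2 * (2 * ((`|u| * `|q|) ^+ 2 + (`|w| * `|p|) ^+ 2)).
  by rewrite /B !exprMn; ring.
rewrite lerD2l ler_pM2l ?ltr0n //.
have r_real : r \is Num.real.
  by apply/CrealP; rewrite /r rmorphD !rmorphM /= !conjCK addrC mulrC [p^* * _]mulrC.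
have s_real : s \is Num.real.
  by apply/CrealP; rewrite /s rmorphD !rmorphM /= !conjCK addrC mulrC [q^* * _]mulrC.
apply: le_trans (real_ler_norm (rpredM r_real s_real)) _.
rewrite normrM; apply: le_trans (ler_pM (normr_ge0 _) (normr_ge0 _)
  (normr_mul_conjD_le u p) (normr_mul_conjD_le w q)) _.
have -> : 2 * (`|u| * `|p|) * (2 * (`|w| * `|q|)) =
    2 * ((`|u| * `|q|) * (`|w| * `|p|) *+ 2) by rewrite mulr2n; ring.
rewrite ler_pM2l ?ltr0n //.
by apply: real_leif_mean_square_scaled; rewrite rpredM ?normr_real.
Qed.

Lemma rademacher_second_moment n (a : 'I_n -> C) :
  \sum_b `|rademacher_sum b a| ^+ 2 = 2 ^+ n * \sum_i `|a i| ^+ 2.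
Proof.
elim: n a => [|n IH] a.
  rewrite big_ord0 mulr0; apply: big1 => b _.
  by rewrite /rademacher_sum big_ord0 normr0 expr0n.
rewrite big_ffun_cons exchange_big /=.
under eq_bigr do under eq_bigr do rewrite rademacher_sum_cons.
under eq_bigr do rewrite sum_sign_normD_sq.
rewrite big_split /= -!mulr_sumr IH sumr_const card_ffun card_bool card_ord.
by rewrite big_ord_recl -[_ *+ (2 ^ n)]mulr_natr natrX exprS; ring.
Qed.

Lemma rademacher_fourth_moment_le n (a c : 'I_n -> C) :
  \sum_b `|rademacher_sum b a| ^+ 2 * `|rademacher_sum b c| ^+ 2 <=
  3 * 2 ^+ n * ((\sum_i `|a i| ^+ 2) * (\sum_i `|c i| ^+ 2)).
Proof.
elim: n a c => [|n IH] a c.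
  rewrite !big_ord0 !mulr0 big1 // => b _.
  by rewrite /rademacher_sum big_ord0 normr0 expr0n mul0r.
rewrite big_ffun_cons exchange_big /=.
under eq_bigr do under eq_bigr do rewrite !rademacher_sum_cons.
apply: le_trans (ler_sum _ (fun b _ => sum_sign_normD_sq_mul_le _ _ _ _)) _.
rewrite !big_split /= sumr_const card_ffun card_bool card_ord.
rewrite -!mulr_sumr -!mulr_suml !rademacher_second_moment.
apply: le_trans (lerD (lerD (lerD (ler_wpM2l _ (IH _ _)) (lexx _)) (lexx _))
  (lexx _)) _; first by [].
rewrite -subr_ge0 !big_ord_recl -[_ *+ (2 ^ n)]mulr_natr natrX.
rewrite (_ : _ - _ = 4 * 2 ^+ n * (`|a ord0| ^+ 2 * `|c ord0| ^+ 2)).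
  by rewrite !mulr_ge0 ?exprn_ge0.
by rewrite exprS; ring.
Qed.

End RademacherMoments.

Section ConjugateTranspose.
Variable C : numClosedFieldType.

Lemma adjmxB m n (A B : 'M[C]_(m, n)) : adjmx (A - B) = adjmx A - adjmx B.
Proof. by rewrite /adjmx map_mxB linearB. Qed.

Lemma adjmxZ m n (a : C) (A : 'M[C]_(m, n)) : adjmx (a *: A) = a^* *: adjmx A.
Proof. by rewrite /adjmx map_mxZ linearZ. Qed.

Lemma adjmx_sum m n I (r : seq I) (F : I -> 'M[C]_(m, n)) :
  adjmx (\sum_(i <- r) F i) = \sum_(i <- r) adjmx (F i).
Proof. by rewrite /adjmx map_mx_sum raddf_sum. Qed.

Lemma adjmxM m n p (A : 'M[C]_(m, n)) (B : 'M[C]_(n, p)) :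
  adjmx (A *m B) = adjmx B *m adjmx A.
Proof. by rewrite /adjmx map_mxM trmx_mul. Qed.

Lemma adjmxK m n (A : 'M[C]_(m, n)) : adjmx (adjmx A) = A.
Proof. by apply/matrixP => i j; rewrite !mxE conjCK. Qed.

Lemma adjmx1 n : adjmx (1%:M : 'M[C]_n) = 1%:M.
Proof. by rewrite /adjmx map_mx1 trmx1. Qed.

Lemma trdot_outer m n (X : 'M[C]_(m, n)) (u : 'cV[C]_m) (f : 'cV[C]_n) :
  trdot X (u *m adjmx f) = (adjmx u *m X *m f) 0 0.
Proof. by rewrite /trdot adjmxM adjmxK mulmxA mxtrace_mulC mulmxA trace_mx11. Qed.

Definition qform n (A : 'M[C]_n) (v : 'cV[C]_n) : C := (adjmx v *m A *m v) 0 0.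

Lemma qformB n (A B : 'M[C]_n) v : qform (A - B) v = qform A v - qform B v.
Proof. by rewrite /qform mulmxBr mulmxBl !mxE. Qed.

Lemma qformZ n (a : C) (A : 'M[C]_n) v : qform (a *: A) v = a * qform A v.
Proof. by rewrite /qform -scalemxAr -scalemxAl mxE. Qed.

Lemma qform_sum n I (r : seq I) (F : I -> 'M[C]_n) v :
  qform (\sum_(i <- r) F i) v = \sum_(i <- r) qform (F i) v.
Proof. by rewrite /qform mulmx_sumr mulmx_suml summxE. Qed.

Lemma qform1 n (v : 'cV[C]_n) : qform 1%:M v = norm2sq v.
Proof.
by rewrite /qform mulmx1 mxE; apply: eq_bigr => i _; rewrite !mxE normCK mulrC.
Qed.

Lemma qform_outer n (u v : 'cV[C]_n) :
  qform (u *m adjmx u) v = `|(adjmx u *m v) 0 0| ^+ 2.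
Proof.
rewrite /qform mulmxA -mulmxA -[adjmx v *m u]adjmxK adjmxM adjmxK.
by rewrite mxE big_ord1 normCK mulrC !mxE.
Qed.

Lemma adjmx_signvec_mul n (b : {ffun 'I_n -> bool}) (v : 'cV[C]_n) :
  (adjmx (signvec C b) *m v) 0 0 = rademacher_sum b (fun i => v i 0).
Proof. by rewrite mxE; apply: eq_bigr => i _; rewrite !mxE conj_sign. Qed.

End ConjugateTranspose.

Theorem lemma4 (C : numClosedFieldType) (M W : nat)
    (f : 'cV[C]_W) (Cm : 'M[C]_(M, W)) :
  loewner_le
    (rademacher_E (fun d : 'cV[C]_M =>
       `|trdot Cm (d *m adjmx f)| ^+ 2 *: (d *m adjmx d)))
    ((3 * norm2sq (Cm *m f)) *: 1%:M).
Proof.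
set c := Cm *m f; set E := rademacher_E _.
have avg_real : ((2 : C) ^+ M)^-1 \is Num.real by rewrite realV realX ?realn.
have norm2sq_real : norm2sq c \is Num.real.
  by apply: rpred_sum => i _; rewrite realX ?normr_real.
have E_hermitian : adjmx E = E.
  rewrite adjmxZ adjmx_sum conj_Creal //; congr (_ *: _); apply: eq_bigr => b _.
  by rewrite adjmxZ adjmxM adjmxK conj_Creal ?realX ?normr_real.
have E_qform v : qform E v = (2 ^+ M)^-1 * \sum_b
    `|rademacher_sum b (fun i => c i 0)| ^+ 2 * `|rademacher_sum b (fun i => v i 0)| ^+ 2.
  rewrite qformZ qform_sum; congr (_ * _); apply: eq_bigr => b _.
  by rewrite qformZ qform_outer trdot_outer -mulmxA !adjmx_signvec_mul.
split.
  by rewrite adjmxB adjmxZ adjmx1 E_hermitian conj_Creal ?rpredM ?realn.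
move=> v; rewrite -/(qform _ v) qformB qformZ qform1 E_qform subr_ge0.
have pow2_gt0 : (0 : C) < 2 ^+ M by rewrite exprn_gt0 ?ltr0n.
apply: le_trans (ler_wpM2l _ (rademacher_fourth_moment_le _ _)) _.
  by rewrite invr_ge0 ltW.
by rewrite [3 * _]mulrC -!mulrA mulKf ?gt_eqF // mulrA.
Qed.
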